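(* Let $\mathcal X$ be finite with $|\mathcal X|\ge n\ge1$, $s:2^{\mathcal X}\to\mathbb R$ non-negative, monotone and submodular, $d$ a metric on $\mathcal X$ with sum-dispersion $\mathrm{div}$, $\lambda>0$, $\alpha\in(0,1]$. If $B_n$ is the output of an $\alpha$-approximate greedy run for $\tilde a=\tfrac12s+\lambda\,\mathrm{div}$ with cardinality $n$, then $a(B_n)\ge\frac\alpha2\max_{B\subseteq\mathcal X,|B|=n}a(B)$, where $a=s+\lambda\,\mathrm{div}$.
   Context: Marginal gain: $\Delta_f(x\mid B):=f(B\cup\{x\})-f(B)$. $s$ is monotone if $\Delta_s(x\mid B)\ge0$ for all $B$, $x\notin B$; non-negative if $s\ge0$; submodular if $\Delta_s(x\mid B')\ge\Delta_s(x\mid B)$ for all $B'\subseteq B\subseteq\mathcal X$ and $x\in\mathcal X\setminus B$. Sum-dispersion: $\mathrm{div}(B):=\frac12\sum_{x\in B}\sum_{x'\in B}d(x,x')$. An $\alpha$-approximate greedy run for $f$ with cardinality $n$: $B_0=\emptyset$ and for $i=0,\dots,n-1$ an element $x_i\in\mathcal X\setminus B_i$ is chosen with $\Delta_f(x_i\mid B_i)\ge\alpha\max_{x\in\mathcal X\setminus B_i}\Delta_f(x\mid B_i)$, and $B_{i+1}=B_i\cup\{x_i\}$; its output is $B_n$. *)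

From mathcomp Require Import all_boot all_order all_algebra.
Set Implicit Arguments. Unset Strict Implicit. Unset Printing Implicit Defensive.
Import Order.TTheory GRing.Theory Num.Theory.
Local Open Scope ring_scope.

Section Defs.
Variables (R : realFieldType) (X : finType).

Definition marg (f : {set X} -> R) (x : X) (B : {set X}) : R :=
  f (x |: B) - f B.

Definition set_monotone (f : {set X} -> R) : Prop :=
  forall (B : {set X}) (x : X), x \notin B -> 0 <= marg f x B.

Definition set_nonneg (f : {set X} -> R) : Prop := forall B, 0 <= f B.

Definition submodular (f : {set X} -> R) : Prop :=
  forall (B' B : {set X}) (x : X), B' \subset B -> x \notin B ->
    marg f x B <= marg f x B'.

Definition is_metric (d : X -> X -> R) : Prop :=
  [/\ forall x y, d x y = 0 <-> x = y,
      forall x y, d x y = d y x &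
      forall x y z, d x z <= d x y + d y z].

Definition div (d : X -> X -> R) (B : {set X}) : R :=
  2^-1 * \sum_(x in B) \sum_(x' in B) d x x'.

Definition greedyB (x : nat -> X) (i : nat) : {set X} :=
  [set x (nat_of_ord j) | j : 'I_i].

(* x is an alpha-approximate greedy run for f with cardinality n:
   for each i < n, x_i is not in B_i and
   Delta_f(x_i | B_i) >= alpha * max_{y notin B_i} Delta_f(y | B_i)
   (the max written out: it is >= alpha * Delta_f(y|B_i) for every y notin B_i). *)
Definition approx_greedy_run (f : {set X} -> R) (alpha : R) (n : nat)
    (x : nat -> X) : Prop :=
  forall i, (i < n)%N ->
    x i \notin greedyB x i /\
    forall y, y \notin greedyB x i ->
      alpha * marg f y (greedyB x i) <= marg f (x i) (greedyB x i).

End Defs.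

From mathcomp Require Import all_boot all_order all_algebra.
From mathcomp Require Import ring lra zify.
Import Order.TTheory GRing.Theory Num.Theory.
Local Open Scope ring_scope.
Set Implicit Arguments. Unset Strict Implicit.

(* Let [O] be any [n]-set and [G k] the first [k] greedy picks. Compare the
   pick [x k] with each alternative [y in O :\: G k]: by submodularity the
   [s]-gains of these alternatives add up to at least [s O - s (G n)], and by
   the triangle inequality their distances to [G k] add up to at least
   [k * #|O :\: G k| * div O / (n (n - 1))]. So each greedy gain is at least
   [alpha / (2 n)] times [s O - s (G n) + 2 lambda k div O / (n - 1)], and
   summing over [k < n] yields
   [alpha (s O - s (G n) + lambda div O) <= s (G n) + 2 lambda div (G n)],
   which gives the factor [alpha / 2] since [alpha <= 1]. *)

Section Metric.
Variables (R : realFieldType) (X : finType) (d : X -> X -> R).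
Hypothesis metric_d : is_metric d.

Lemma metric_xx x : d x x = 0.
Proof. by case: metric_d => h0 _ _; apply/h0. Qed.

Lemma metricC x y : d x y = d y x.
Proof. by case: metric_d. Qed.

Lemma metric_triangle x y z : d x z <= d x y + d y z.
Proof. by case: metric_d. Qed.

Lemma metric_ge0 x y : 0 <= d x y.
Proof. by have := metric_triangle x y x; rewrite metric_xx (metricC y x); lra. Qed.

Definition cross (A B : {set X}) : R := \sum_(u in A) \sum_(v in B) d u v.

Lemma cross_ge0 A B : 0 <= cross A B.
Proof. by apply: sumr_ge0 => u _; apply: sumr_ge0 => v _; apply: metric_ge0. Qed.

Lemma crossC A B : cross A B = cross B A.
Proof.
rewrite /cross exchange_big /=.
by apply: eq_bigr => u _; apply: eq_bigr => v _; rewrite metricC.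
Qed.

Lemma cross_setIDl A B Z : cross A B = cross (A :&: Z) B + cross (A :\: Z) B.
Proof. by rewrite /cross (big_setID Z). Qed.

Lemma cross_setIDr A B Z : cross A B = cross A (B :&: Z) + cross A (B :\: Z).
Proof. by rewrite /cross -big_split; apply: eq_bigr => u _; rewrite (big_setID Z). Qed.

(* For fixed [y], summing [d u v <= d u y + d y v] over [u, v in A] bounds
   [cross A A] by [2 (#|A| - 1) \sum_(u in A) d u y], as the diagonal terms
   [u = v] contribute [2 d u y] at no cost; then sum over [y in B]. *)
Lemma card_cross_self_le (A B : {set X}) :
  #|B|%:R * cross A A <= 2 * (#|A|%:R - 1) * cross A B.
Proof.
have cross_le y : cross A A <= 2 * (#|A|%:R - 1) * \sum_(u in A) d u y.
  have diag u : u \in A ->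
      2 * d u y <= \sum_(v in A) (d u y + d y v - d u v).
    move=> uA; rewrite (big_setD1 u) //= metric_xx (metricC y u).
    suff : 0 <= \sum_(v in A :\ u) (d u y + d y v - d u v) by lra.
    by apply: sumr_ge0 => v _; have := metric_triangle u y v; lra.
  have expand : \sum_(u in A) \sum_(v in A) (d u y + d y v - d u v) =
      2 * #|A|%:R * \sum_(u in A) d u y - cross A A.
    have symm : \sum_(v in A) d y v = \sum_(u in A) d u y.
      by apply: eq_bigr => v _; rewrite metricC.
    rewrite (eq_bigr (fun u => #|A|%:R * d u y + \sum_(v in A) d y v
                               - \sum_(v in A) d u v)); last first.
      by move=> u _; rewrite sumrB big_split /= sumr_const mulr_natl.
    rewrite sumrB big_split /= sumr_const -mulr_sumr symm /cross.
    by rewrite -[_ *+ #|A|]mulr_natr; ring.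
  have : \sum_(u in A) 2 * d u y
         <= \sum_(u in A) \sum_(v in A) (d u y + d y v - d u v).
    exact: ler_sum.
  rewrite -mulr_sumr expand; lra.
rewrite mulr_natl -sumr_const.
apply: le_trans (ler_sum _ (fun y _ => cross_le y)) _.
by rewrite -big_distrr /= /cross exchange_big.
Qed.

(* With [A = O :&: G] and [C = O :\: G], bound the blocks [cross A A] and
   [cross C C] of [div d O] by [card_cross_self_le]; the weights fit because
   [#|G :\: O| < #|C|]. *)
Lemma card_div_le_cross (O G : {set X}) : (#|G| < #|O|)%N ->
  #|G|%:R * #|O :\: G|%:R * div d O
    <= #|O|%:R * (#|O|%:R - 1) * cross (O :\: G) G.
Proof.
move=> ltGO.
set A := O :&: G; set C := O :\: G; set B := G :\: O.
have cardO : (#|A| + #|C| = #|O|)%N by rewrite cardsID.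
have cardG : (#|A| + #|B| = #|G|)%N by rewrite /A /B setIC cardsID.
have divO : div d O = 2^-1 * (cross A A + cross C C + 2 * cross A C).
  rewrite /div -/(cross O O) (cross_setIDl O O G) (cross_setIDr (O :&: G) O G).
  by rewrite (cross_setIDr (O :\: G) O G) -/A -/C (crossC C A); congr (_ * _); ring.
have crossCG : cross C G = cross A C + cross C B.
  by rewrite (cross_setIDr C G O) setIC crossC.
have hAA := card_cross_self_le A C.
have hCA := card_cross_self_le C A.
have hCB := card_cross_self_le C B.
rewrite (crossC C A) in hCA.
have ltBC : #|B|%:R + 1 <= #|C|%:R :> R by rewrite natr1 ler_nat; lia.
have a0 : 0 <= #|A|%:R :> R := ler0n _ _.
have b0 : 0 <= #|B|%:R :> R := ler0n _ _.
have xAC := cross_ge0 A C; have xCB := cross_ge0 C B.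
rewrite divO crossCG -cardO -cardG !natrD.
set a := #|A|%:R in a0 hAA hCA *; set b := #|B|%:R in b0 ltBC hCB *.
set c := #|C|%:R in ltBC hAA hCA hCB *.
have := ler_wpM2l (addr_ge0 a0 b0) hAA.
have cb0 : 0 <= c - b by lra.
have ac0 : 0 <= a + c by lra.
have := ler_wpM2l cb0 hCA.
have := ler_wpM2l ac0 hCB.
have : 0 <= a * (c - b) * cross A C by rewrite !mulr_ge0.
have : 0 <= a * (a + c) * cross C B by rewrite !mulr_ge0.
nra.
Qed.

Lemma div_setU1 (G : {set X}) y : y \notin G ->
  div d (y |: G) = div d G + \sum_(z in G) d y z.
Proof.
move=> yG; rewrite /div.
under eq_bigr => u _ do rewrite (big_setU1 _ yG) /=.
rewrite (big_setU1 _ yG) /= metric_xx add0r big_split /=.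
have -> : \sum_(u in G) d u y = \sum_(z in G) d y z.
  by apply: eq_bigr => u _; rewrite metricC.
rewrite addrA [_ + _ + _]addrC mulrDr; congr (_ + _); lra.
Qed.

End Metric.

Lemma finset_ind (T : finType) (P : {set T} -> Prop) : P set0 ->
  (forall (x : T) (A : {set T}), x \notin A -> P A -> P (x |: A)) ->
  forall A, P A.
Proof.
move=> P0 PU1 A; move: {2}#|A| (erefl #|A|) => k; elim: k A => [|k IH] A cardA.
  by rewrite (cards0_eq cardA).
have [y yA] : {y | y \in A} by apply/sigW/card_gt0P; rewrite cardA.
rewrite -(setD1K yA); apply: PU1; first by rewrite !inE eqxx.
by apply: IH; move: cardA; rewrite (cardsD1 y) yA => -[].
Qed.

Section SetFunction.
Variables (R : realFieldType) (X : finType) (s : {set X} -> R).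

Lemma set_monotone_subset : set_monotone s ->
  forall A B : {set X}, A \subset B -> s A <= s B.
Proof.
move=> mono_s A B /setUidPr <-; elim/finset_ind: B => [|y B yB IH].
  by rewrite setU0.
rewrite setUCA; apply: le_trans IH _.
have [yAB|yAB] := boolP (y \in A :|: B).
  by have /setUidPr -> : [set y] \subset A :|: B by rewrite sub1set.
by have := mono_s _ _ yAB; rewrite /marg subr_ge0.
Qed.

Lemma submodular_setU_le : submodular s -> forall G C : {set X},
  s (G :|: C) - s G <= \sum_(y in C :\: G) marg s y G.
Proof.
move=> submod_s G; elim/finset_ind => [|y C yC IH].
  by rewrite setU0 subrr set0D big_set0.
have [yG|yG] := boolP (y \in G).
  have -> : (y |: C) :\: G = C :\: G.
    rewrite setDUl (_ : [set y] :\: G = set0) ?set0U //.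
    by apply/eqP; rewrite setD_eq0 sub1set.
  rewrite setUCA; have /setUidPr -> // : [set y] \subset G :|: C.
  by rewrite sub1set inE yG.
have -> : (y |: C) :\: G = y |: (C :\: G).
  by rewrite setDUl; congr (_ :|: _); apply/setDidPl; rewrite disjoints1.
rewrite big_setU1 ?inE ?negb_and ?yC ?orbT //= setUCA.
have yGC : y \notin G :|: C by rewrite inE negb_or yG.
have := submod_s _ _ _ (subsetUl G C) yGC; rewrite /marg; lra.
Qed.

End SetFunction.

Section GreedySets.
Variables (X : finType) (x : nat -> X).

Lemma greedyB0 : greedyB x 0 = set0.
Proof. by apply/setP => z; rewrite inE; apply/imsetP => -[[]]. Qed.

Lemma greedyBS i : greedyB x i.+1 = x i |: greedyB x i.
Proof.
apply/setP => z; apply/imsetP/setU1P => [[j _ ->]|[->|/imsetP [j _ ->]]].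
- have [ji|] := ltnP j i; first by right; apply/imsetP; exists (Ordinal ji).
  by move=> le_ij; left; congr x; apply/eqP; rewrite eqn_leq le_ij -ltnS ltn_ord.
- by exists ord_max.
- by exists (widen_ord (leqnSn i) j).
Qed.

Lemma greedyB_subset i j : (i <= j)%N -> greedyB x i \subset greedyB x j.
Proof.
move=> le_ij; apply/subsetP => _ /imsetP [k _ ->]; apply/imsetP.
by exists (Ordinal (leq_trans (ltn_ord k) le_ij)).
Qed.

Lemma card_greedyB (R : realFieldType) (f : {set X} -> R) alpha n :
  approx_greedy_run f alpha n x -> forall i, (i <= n)%N -> #|greedyB x i| = i.
Proof.
move=> run; elim=> [|i IH] le_in; first by rewrite greedyB0 cards0.
have [fresh _] := run i le_in.
by rewrite greedyBS cardsU1 fresh IH // ltnW.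
Qed.

End GreedySets.

Section GreedyRun.
Variables (R : realFieldType) (X : finType) (n : nat) (s : {set X} -> R).
Variables (d : X -> X -> R) (lambda alpha : R) (x : nat -> X) (O : {set X}).
Hypotheses (nonneg_s : set_nonneg s) (mono_s : set_monotone s).
Hypotheses (submod_s : submodular s) (metric_d : is_metric d).
Hypotheses (lambda_gt0 : 0 < lambda) (alpha_gt0 : 0 < alpha).
Hypotheses (n_gt0 : (0 < n)%N) (cardO : #|O| = n).

Let f (B : {set X}) : R := 2^-1 * s B + lambda * div d B.
Hypothesis run : approx_greedy_run f alpha n x.

Let p : R := n%:R.
Let S : R := Num.max 0 (s O - s (greedyB x n)).
(* For [n = 1] this is [div d O / 0 = 0], harmless since then [div d O = 0]. *)
Let M : R := div d O / (p - 1).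

Lemma marg_objective (G : {set X}) y : y \notin G ->
  marg f y G = 2^-1 * marg s y G + lambda * \sum_(z in G) d y z.
Proof. by move=> yG; rewrite /marg /f div_setU1 //; ring. Qed.

Lemma cross_setD_greedyB_ge k : (k < n)%N ->
  k%:R * #|O :\: greedyB x k|%:R * M
    <= p * cross d (O :\: greedyB x k) (greedyB x k).
Proof.
move=> lt_kn; have cardG := card_greedyB run (ltnW lt_kn).
have [lt1n|le_n1] := ltnP 1 n; last first.
  have -> : k = 0%N by lia.
  by rewrite !mul0r mulr_ge0 ?ler0n ?cross_ge0.
have p1_gt0 : 0 < p - 1 by rewrite subr_gt0 ltr1n.
rewrite -(ler_pM2r p1_gt0) /M -[leLHS]mulrA divfK ?gt_eqF // [leRHS]mulrAC.
have := card_div_le_cross metric_d (_ : (#|greedyB x k| < #|O|)%N).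
by rewrite cardG cardO -/p; apply.
Qed.

(* Sum the [alpha]-greedy inequality over the alternatives [y in O :\: G]:
   their [s]-gains add up to at least [S] by submodularity, their distances to
   [G] to at least [k * #|O :\: G| * M / n] by [card_div_le_cross]. *)
Lemma greedy_gain_lower k : (k < n)%N ->
  alpha * (S + 2 * lambda * k%:R * M) <= 2 * p * marg f (x k) (greedyB x k).
Proof.
move=> lt_kn; set G := greedyB x k; set C := O :\: G; set g := marg f (x k) G.
have [_ greedy_choice] := run lt_kn.
have notinG y : y \in C -> y \notin G by rewrite inE => /andP [].
have avg_gain : alpha * (2^-1 * \sum_(y in C) marg s y G + lambda * cross d C G)
                  <= #|C|%:R * g.
  have -> : 2^-1 * \sum_(y in C) marg s y G + lambda * cross d C G
            = \sum_(y in C) marg f y G.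
    rewrite /cross !mulr_sumr -big_split /=.
    by apply: eq_bigr => y /notinG yG; rewrite marg_objective.
  rewrite mulr_sumr mulr_natl -sumr_const; apply: ler_sum => y /notinG.
  exact: greedy_choice.
have S_le : S <= \sum_(y in C) marg s y G.
  rewrite ge_max sumr_ge0 => [|y /notinG]; last exact: mono_s.
  apply: le_trans (submodular_setU_le submod_s G O).
  have := set_monotone_subset mono_s (subsetUr G O).
  have := set_monotone_subset mono_s (greedyB_subset x (ltnW lt_kn)).
  lra.
have card_OG : (#|O :&: G| + #|C| = n)%N by rewrite cardsID.
have le_OGk : (#|O :&: G| <= k)%N.
  by rewrite -(card_greedyB run (ltnW lt_kn)) subset_leq_card ?subsetIr.
have c_gt0 : 0 < #|C|%:R :> R by rewrite ltr0n; lia.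
have c_le : #|C|%:R <= p by rewrite ler_nat; lia.
have S_ge0 : 0 <= S by rewrite le_max lexx.
have := cross_setD_greedyB_ge lt_kn; rewrite -/G -/C => dispersion.
set D := \sum_(y in C) marg s y G in avg_gain S_le.
set T := cross d C G in avg_gain dispersion.
rewrite -(ler_pM2l c_gt0).
have p_ge0 : 0 <= 2 * p by rewrite mulr_ge0 ?ler0n.
have := ler_wpM2l p_ge0 avg_gain.
have : 0 <= alpha * (p - #|C|%:R) * S by rewrite !mulr_ge0 ?subr_ge0 // ltW.
have : 0 <= alpha * p * (D - S) by rewrite !mulr_ge0 ?subr_ge0 // ltW.
have : 0 <= alpha * lambda * (p * T - k%:R * #|C|%:R * M).
  by rewrite !mulr_ge0 ?subr_ge0 // ltW.
lra.
Qed.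

Lemma greedy_value_lower k : (k <= n)%N ->
  alpha * (k%:R * S + lambda * (k%:R * (k%:R - 1)) * M)
    <= 2 * p * f (greedyB x k).
Proof.
elim: k => [|k IH] le_kn.
  rewrite greedyB0 /f /div big_set0 !(mul0r, mulr0, add0r, addr0).
  by rewrite !mulr_ge0 ?ler0n ?invr_ge0 ?nonneg_s.
have -> : f (greedyB x k.+1) = f (greedyB x k) + marg f (x k) (greedyB x k).
  by rewrite /marg greedyBS; ring.
have := greedy_gain_lower le_kn; have := IH (ltnW le_kn).
rewrite -natr1; lra.
Qed.

Lemma greedy_run_bound :
  alpha * (s O - s (greedyB x n) + lambda * div d O) <= 2 * f (greedyB x n).
Proof.
have p_gt0 : 0 < p by rewrite ltr0n.
have pM : (p - 1) * M = div d O.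
  have [lt1n|le_n1] := ltnP 1 n.
    by rewrite mulrC divfK // subr_eq0 pnatr_eq1 gtn_eqF.
  have /cards1P [o ->] : #|O| == 1%N by rewrite cardO eqn_leq le_n1.
  by rewrite /p (_ : n = 1%N) ?subrr ?mul0r /div ?big_set1 ?metric_xx ?mulr0 //; lia.
have := greedy_value_lower (leqnn n).
rewrite -/p (_ : alpha * _ = p * (alpha * (S + lambda * div d O))); last first.
  by rewrite -pM; ring.
rewrite [2 * p]mulrC -mulrA ler_pM2l //.
have : s O - s (greedyB x n) <= S by rewrite le_max lexx orbT.
move=> /(ler_wpM2l (ltW alpha_gt0)); lra.
Qed.

End GreedyRun.

Theorem mainTheorem13 (R : realFieldType) (X : finType) (n : nat)
    (s : {set X} -> R) (d : X -> X -> R) (lambda alpha : R)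
    (x : nat -> X) :
  (1 <= n)%N -> (n <= #|X|)%N ->
  set_nonneg s -> set_monotone s -> submodular s ->
  is_metric d -> 0 < lambda -> 0 < alpha -> alpha <= 1 ->
  approx_greedy_run (fun B => 2^-1 * s B + lambda * div d B) alpha n x ->
  forall B : {set X}, #|B| = n ->
    alpha / 2 * (s B + lambda * div d B)
      <= s (greedyB x n) + lambda * div d (greedyB x n).
Proof.
move=> n_gt0 _ nonneg_s mono_s submod_s metric_d lambda_gt0 alpha_gt0 alpha_le1
  run B cardB.
have /= := greedy_run_bound nonneg_s mono_s submod_s metric_d lambda_gt0
  alpha_gt0 n_gt0 cardB run.
have := ler_wpM2r (nonneg_s (greedyB x n)) alpha_le1.
lra.
Qed.
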